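(* Suppose a Tychonoff space $X$ with $nw(X)\leq\mathfrak c$ contains a dense subspace which is a Lindelöf $\Sigma$-space. Then $|C(X)|\leq\mathfrak c$, $w(X)\leq\mathfrak c$, and the Stone–Čech compactification satisfies $w(\beta X)\leq\mathfrak c$.
   Context: $C(X)$ is the set of continuous real-valued functions on $X$; $nw$ network weight, $w$ weight, $\mathfrak c=2^\omega$. The Nagami number $Nag(Y)$ of a Tychonoff space $Y$ is the minimal cardinality of a family $\mathcal F$ of closed subsets of $\beta Y$ such that for every $y\in Y$ and $z\in\beta Y\setminus Y$ there is $F\in\mathcal F$ with $y\in F$, $z\notin F$; $Y$ is a Lindelöf $\Sigma$-space if $Nag(Y)\leq\omega$. *)

From Stdlib Require Import Reals List.
Open Scope R_scope.

Record Top := {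
  pt :> Type;
  isopen : (pt -> Prop) -> Prop;
  open_full : isopen (fun _ => True);
  open_inter : forall U V, isopen U -> isopen V -> isopen (fun x => U x /\ V x);
  open_union : forall F : (pt -> Prop) -> Prop,
      (forall U, F U -> isopen U) -> isopen (fun x => exists U, F U /\ U x)
}.

Definition isclosed (X : Top) (F : X -> Prop) : Prop := isopen X (fun x => ~ F x).

Definition card_le_c (I : Type) : Prop :=
  exists f : I -> (nat -> bool), forall a b, f a = f b -> a = b.
Definition countable (I : Type) : Prop :=
  exists f : I -> nat, forall a b, f a = f b -> a = b.

Definition continuous (X Y : Top) (f : X -> Y) : Prop :=
  forall V, isopen Y V -> isopen X (fun x => V (f x)).

Definition continuous_R (X : Top) (f : X -> R) : Prop :=
  forall x eps, 0 < eps ->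
    exists U, isopen X U /\ U x /\ forall y, U y -> Rabs (f y - f x) < eps.

Definition CX (X : Top) : Type := { f : X -> R | continuous_R X f }.

Definition bounded (X : Top) (f : X -> R) : Prop :=
  exists M, forall x, Rabs (f x) <= M.

Definition T1 (X : Top) : Prop :=
  forall x y : X, x <> y -> exists U, isopen X U /\ U x /\ ~ U y.
Definition hausdorff (X : Top) : Prop :=
  forall x y : X, x <> y -> exists U V, isopen X U /\ isopen X V /\ U x /\ V y /\
    forall z, ~ (U z /\ V z).
Definition completely_regular (X : Top) : Prop :=
  forall (F : X -> Prop) (x : X), isclosed X F -> ~ F x ->
    exists f : X -> R, continuous_R X f /\ f x = 0 /\
      (forall y, F y -> f y = 1) /\ (forall y, 0 <= f y <= 1).
Definition tychonoff (X : Top) : Prop := T1 X /\ completely_regular X.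

Definition compact (X : Top) : Prop :=
  forall F : (X -> Prop) -> Prop,
    (forall U, F U -> isopen X U) ->
    (forall x, exists U, F U /\ U x) ->
    exists l : list (X -> Prop), (forall U, In U l -> F U) /\
      (forall x, exists U, In U l /\ U x).

Definition nw_le_c (X : Top) : Prop :=
  exists (I : Type) (N : I -> X -> Prop), card_le_c I /\
    forall U x, isopen X U -> U x -> exists i, N i x /\ forall y, N i y -> U y.
Definition w_le_c (X : Top) : Prop :=
  exists (I : Type) (B : I -> X -> Prop), card_le_c I /\
    (forall i, isopen X (B i)) /\
    forall U x, isopen X U -> U x -> exists i, B i x /\ forall y, B i y -> U y.

Definition dense (X : Top) (D : X -> Prop) : Prop :=
  forall U, isopen X U -> (exists x, U x) -> exists x, U x /\ D x.

Section Sub.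
Variables (X : Top) (D : X -> Prop).
Definition sub_open (W : {x | D x} -> Prop) : Prop :=
  exists U, isopen X U /\ forall y, W y <-> U (proj1_sig y).
Lemma sub_open_full : sub_open (fun _ => True).
Proof. exists (fun _ => True); split; [apply open_full | tauto]. Qed.
Lemma sub_open_inter : forall U V, sub_open U -> sub_open V ->
  sub_open (fun x => U x /\ V x).
Proof.
  intros U V [U' [HU EU]] [V' [HV EV]].
  exists (fun x => U' x /\ V' x); split; [apply open_inter; auto|].
  intro y; rewrite EU, EV; tauto.
Qed.
Lemma sub_open_union : forall F : ({x | D x} -> Prop) -> Prop,
  (forall U, F U -> sub_open U) -> sub_open (fun x => exists U, F U /\ U x).
Proof.
  intros F HF.
  exists (fun x => exists U, (isopen X U /\ exists W, F W /\
            forall y, W y <-> U (proj1_sig y)) /\ U x).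
  split.
  - apply open_union; intros U [HU _]; exact HU.
  - intro y; split.
    + intros [W [FW Wy]]. destruct (HF W FW) as [U [HU EU]].
      exists U; split; [split; [exact HU | exists W; auto] | apply EU; exact Wy].
    + intros [U [[HU [W [FW EW]]] Uy]]. exists W; split; [exact FW | apply EW; exact Uy].
Qed.
Definition subspace : Top :=
  {| pt := {x | D x}; isopen := sub_open; open_full := sub_open_full;
     open_inter := sub_open_inter; open_union := sub_open_union |}.
End Sub.

(** It is the
    Stone-Cech compactification if moreover every bounded continuous real
    function on X extends continuously over K (Engelking, Thm 3.6.1/Cor 3.6.3). *)
Definition embedding (X K : Top) (e : X -> K) : Prop :=
  continuous X K e /\ (forall a b, e a = e b -> a = b) /\
  forall U, isopen X U -> exists V, isopen K V /\ forall x, U x <-> V (e x).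

Definition compactification (X K : Top) (e : X -> K) : Prop :=
  compact K /\ hausdorff K /\ embedding X K e /\ dense K (fun z => exists x, e x = z).

Definition stone_cech (X K : Top) (e : X -> K) : Prop :=
  compactification X K e /\
  forall f : X -> R, continuous_R X f -> bounded X f ->
    exists g : K -> R, continuous_R K g /\ forall x, g (e x) = f x.

(** Nag(Y) <= omega, computed in a Stone-Cech compactification (K, e) of Y. *)
Definition nagami_countable_in (Y K : Top) (e : Y -> K) : Prop :=
  exists (I : Type) (F : I -> K -> Prop), countable I /\
    (forall i, isclosed K (F i)) /\
    forall (y : Y) (z : K), ~ (exists y', e y' = z) -> exists i, F i (e y) /\ ~ F i z.

Definition lindelof_sigma (Y : Top) : Prop :=
  exists (K : Top) (e : Y -> K), stone_cech Y K e /\ nagami_countable_in Y K e.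

(* Fix a network {N_i} of size at most c and, for the dense Lindelof Sigma
   subspace D, a compactification L of D with countably many closed sets F_n
   witnessing Nag(D) <= omega.  For all i, j pick a continuous function that is
   < 1/3 on N_i and > 2/3 on N_j whenever one exists: these c functions separate
   the points of X, and the finite intersections of the sets where they are
   < 1/2 serve as basic sets.  For y in D, the intersection of the F_n
   containing y is a compact subset of D.  So, for f in C(X) and an interval
   [a, b] containing f(y), compactness squeezes a finite union of basic sets
   between f^-1[a, b] and f^-1(a - d, b + d) on some finite intersection of the
   F_n.  Recording such unions for all finite sets of indices and all intervals
   of a countable grid determines f on D, hence on X, so |C(X)| <= c^omega = c.
   The sets [f < 1/2] then form a base of X, and, by Urysohn's lemma and
   density, the extensions of the members of C(X) give a base of every
   compactification of X. *)

From Pilot Require Import Defs.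
From Stdlib Require Import Reals List Lra Lia ZArith Classical ClassicalEpsilon
  FunctionalExtensionality PropExtensionality ProofIrrelevance Cantor.
Open Scope R_scope.

(** * Cardinal arithmetic *)

Lemma card_le_c_inj (A B : Type) (g : A -> B) :
  (forall a b, g a = g b -> a = b) -> card_le_c B -> card_le_c A.
Proof. intros Hg [f Hf]. exists (fun a => f (g a)). auto. Qed.

Lemma countable_nat : countable nat.
Proof. exists (fun n => n). auto. Qed.

Lemma countable_bool : countable bool.
Proof. exists (fun b : bool => if b then 1%nat else 0%nat). intros [] []; easy. Qed.

Lemma countable_Z : countable Z.
Proof.
  exists (fun z => match z with Z0 => 0%nat | Zpos p => (2 * Pos.to_nat p)%nat
                  | Zneg p => S (2 * Pos.to_nat p) end).
  intros [|p|p] [|q|q] H; try lia; f_equal; lia.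
Qed.

Lemma countable_prod (A B : Type) : countable A -> countable B -> countable (A * B).
Proof.
  intros [f Hf] [g Hg]. exists (fun p => to_nat (f (fst p), g (snd p))).
  intros [a1 b1] [a2 b2] H. apply (f_equal of_nat) in H. rewrite !cancel_of_to in H.
  injection H as Ha Hb. f_equal; auto.
Qed.

Lemma countable_list (A : Type) : countable A -> countable (list A).
Proof.
  intros [f Hf].
  exists (fix code l := match l with nil => 0%nat | cons a l' => S (to_nat (f a, code l')) end).
  induction a as [|x l IH]; destruct b as [|y l']; intros H; try discriminate; auto.
  apply (f_equal (fun n => of_nat (pred n))) in H. cbv beta iota in H.
  cbn [Init.Nat.pred] in H.
  rewrite !cancel_of_to in H. injection H as Hxy Hl. f_equal; auto.
Qed.

Lemma card_le_c_pred (C : Type) : countable C -> card_le_c (C -> bool).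
Proof.
  intros [g Hg].
  exists (fun h n => if excluded_middle_informative (exists c, g c = n /\ h c = true)
                    then true else false).
  intros h h' E. apply functional_extensionality; intro c.
  assert (Ec := f_equal (fun k => k (g c)) E); cbv beta in Ec.
  destruct (excluded_middle_informative (exists c', g c' = g c /\ h c' = true))
    as [[c1 [E1 H1]]|Hn];
  destruct (excluded_middle_informative (exists c', g c' = g c /\ h' c' = true))
    as [[c2 [E2 H2]]|Hn']; try discriminate.
  - apply Hg in E1; apply Hg in E2; subst; congruence.
  - destruct (h c) eqn:Hc, (h' c) eqn:Hc'; auto; exfalso; eauto.
Qed.

Lemma card_le_c_fun (A B : Type) : countable A -> card_le_c B -> card_le_c (A -> B).
Proof.
  intros HA [fb Hfb].
  apply (card_le_c_inj _ _ (fun F (p : A * nat) => fb (F (fst p)) (snd p))).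
  - intros F G E. apply functional_extensionality; intro a. apply Hfb.
    apply functional_extensionality; intro n. exact (f_equal (fun k => k (a, n)) E).
  - apply card_le_c_pred, countable_prod; [exact HA | apply countable_nat].
Qed.

Lemma card_le_c_prod (A B : Type) : card_le_c A -> card_le_c B -> card_le_c (A * B).
Proof.
  intros [f Hf] [g Hg].
  apply (card_le_c_inj _ _
    (fun p (q : bool * nat) => if fst q then f (fst p) (snd q) else g (snd p) (snd q))).
  - intros [a b] [a' b'] E. f_equal; [apply Hf | apply Hg];
      apply functional_extensionality; intro n.
    + exact (f_equal (fun k => k (true, n)) E).
    + exact (f_equal (fun k => k (false, n)) E).
  - apply card_le_c_pred, countable_prod; [apply countable_bool | apply countable_nat].
Qed.

Lemma card_le_c_option (B : Type) : card_le_c B -> card_le_c (option B).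
Proof.
  intros [f Hf].
  exists (fun o n => match o with None => false | Some b =>
            match n with O => true | S m => f b m end end).
  intros [a|] [b|] H; auto.
  - f_equal. apply Hf. apply functional_extensionality. intro m.
    exact (f_equal (fun h => h (S m)) H).
  - discriminate (f_equal (fun h => h O) H).
  - discriminate (f_equal (fun h => h O) H).
Qed.

Lemma card_le_c_list (B : Type) : card_le_c B -> card_le_c (list B).
Proof.
  intros HB. apply (card_le_c_inj _ _ (@nth_error B)).
  - intros l l' E. apply nth_error_ext; intro n. exact (f_equal (fun k => k n) E).
  - apply card_le_c_fun; [apply countable_nat | apply card_le_c_option, HB].
Qed.

Lemma open_ext (X : Top) (U V : X -> Prop) :
  (forall x, U x <-> V x) -> isopen X U -> isopen X V.
Proof.
  intros H HU. replace V with U; auto.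
  apply functional_extensionality; intro x. apply propositional_extensionality. auto.
Qed.

Lemma open_exists (X : Top) (A : Type) (P : A -> X -> Prop) :
  (forall a, isopen X (P a)) -> isopen X (fun x => exists a, P a x).
Proof.
  intros H. apply (open_ext X (fun x => exists W, (exists a, W = P a) /\ W x)).
  - intro x; split; [intros [W [[a ->] Hx]]; eauto | intros [a Hx]; eauto].
  - apply open_union. intros W [a ->]; auto.
Qed.

Lemma open_or (X : Top) (U V : X -> Prop) :
  isopen X U -> isopen X V -> isopen X (fun x => U x \/ V x).
Proof.
  intros HU HV. apply (open_ext X (fun x => exists b : bool, (if b then U else V) x)).
  - intro x; split; [intros [[] Hx]; auto | intros [Hx|Hx]; [exists true | exists false]; auto].
  - apply open_exists. intros []; auto.
Qed.

Lemma open_list_exists (X : Top) (A : Type) (l : list A) (P : A -> X -> Prop) :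
  (forall a, In a l -> isopen X (P a)) -> isopen X (fun x => exists a, In a l /\ P a x).
Proof.
  intros H. apply (open_ext X (fun x => exists a : {a | In a l}, P (proj1_sig a) x)).
  - intro x; split; [intros [[a Ha] Hx]; eauto | intros [a [Ha Hx]]; exists (exist _ a Ha); auto].
  - apply open_exists. intros [a Ha]; auto.
Qed.

Lemma open_list_forall (X : Top) (A : Type) (l : list A) (P : A -> X -> Prop) :
  (forall a, In a l -> isopen X (P a)) -> isopen X (fun x => forall a, In a l -> P a x).
Proof.
  induction l as [|b l IH]; intros H.
  - apply (open_ext X (fun _ => True)); [intro x; split; [intros _ a []|auto] | apply open_full].
  - apply (open_ext X (fun x => P b x /\ forall a, In a l -> P a x)).
    + intro x; split; [intros [H1 H2] a [<-|Ha]; auto | intros H1; split; auto with datatypes].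
    + apply open_inter; [apply H; left; auto | apply IH; intros a Ha; apply H; right; auto].
Qed.

Lemma open_of_nbhds (X : Top) (U : X -> Prop) :
  (forall x, U x -> exists W, isopen X W /\ W x /\ forall y, W y -> U y) -> isopen X U.
Proof.
  intros H. apply (open_ext X (fun x => exists W, (isopen X W /\ forall y, W y -> U y) /\ W x)).
  - intro x; split; [intros [W [[_ HW] Wx]]; auto|].
    intros Ux. destruct (H x Ux) as [W [HW [Wx HWU]]]. eauto.
  - apply open_union. intros W [HW _]; auto.
Qed.

Lemma open_sublevel (X : Top) (f : X -> R) (c : R) :
  continuous_R X f -> isopen X (fun x => f x < c).
Proof.
  intros Hf. apply open_of_nbhds. intros x Hx.
  destruct (Hf x (c - f x)) as [U [HU [Ux HUy]]]; [lra|].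
  exists U; repeat split; auto. intros y Uy. specialize (HUy y Uy). apply Rabs_def2 in HUy. lra.
Qed.

Lemma open_superlevel (X : Top) (f : X -> R) (c : R) :
  continuous_R X f -> isopen X (fun x => c < f x).
Proof.
  intros Hf. apply open_of_nbhds. intros x Hx.
  destruct (Hf x (f x - c)) as [U [HU [Ux HUy]]]; [lra|].
  exists U; repeat split; auto. intros y Uy. specialize (HUy y Uy). apply Rabs_def2 in HUy. lra.
Qed.

Lemma open_neq (X : Top) (f g : X -> R) :
  continuous_R X f -> continuous_R X g -> isopen X (fun x => f x <> g x).
Proof.
  intros Hf Hg. apply open_of_nbhds. intros x Hx.
  assert (Hd : 0 < Rabs (f x - g x) / 2) by (pose proof (Rabs_pos_lt (f x - g x)); lra).
  destruct (Hf x _ Hd) as [U [HU [Ux HUy]]]. destruct (Hg x _ Hd) as [V [HV [Vx HVy]]].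
  exists (fun y => U y /\ V y); repeat split; auto; [apply open_inter; auto|].
  intros y [Uy Vy] E. specialize (HUy y Uy). specialize (HVy y Vy). rewrite E in HUy.
  pose proof (Rabs_triang (f x - g y) (g y - g x)). rewrite Rabs_minus_sym in HUy.
  replace (f x - g y + (g y - g x)) with (f x - g x) in * by ring. lra.
Qed.

Lemma T1_open_neq (X : Top) (p : X) : T1 X -> isopen X (fun y => y <> p).
Proof.
  intros HT. apply open_of_nbhds. intros y Hy.
  destruct (HT y p Hy) as [U [HU [Uy nUp]]].
  exists U; repeat split; auto. intros z Uz ->. contradiction.
Qed.

Lemma hausdorff_T1 (X : Top) : hausdorff X -> T1 X.
Proof.
  intros Hh x y Hxy. destruct (Hh x y Hxy) as [U [V [HU [_ [Ux [Vy Hd]]]]]].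
  exists U; repeat split; auto. intros Uy. apply (Hd y); auto.
Qed.

Lemma continuous_R_const (X : Top) (c : R) : continuous_R X (fun _ => c).
Proof.
  intros x eps Heps. exists (fun _ => True); repeat split; [apply open_full|].
  intros y _. rewrite Rminus_diag, Rabs_R0. auto.
Qed.

Lemma continuous_R_comp (X Y : Top) (e : X -> Y) (g : Y -> R) :
  continuous X Y e -> continuous_R Y g -> continuous_R X (fun x => g (e x)).
Proof.
  intros He Hg x eps Heps. destruct (Hg (e x) eps Heps) as [U [HU [Ux HUy]]].
  exists (fun y => U (e y)); repeat split; auto.
Qed.

Lemma continuous_R_dense_eq (X : Top) (D : X -> Prop) (f g : X -> R) :
  dense X D -> continuous_R X f -> continuous_R X g ->
  (forall x, D x -> f x = g x) -> forall x, f x = g x.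
Proof.
  intros HD Hf Hg H x. apply NNPP; intro Hne.
  destruct (HD _ (open_neq X f g Hf Hg) (ex_intro _ x Hne)) as [y [Hy Dy]].
  apply Hy; auto.
Qed.

Lemma CX_ext (X : Top) (f g : CX X) : (forall x, proj1_sig f x = proj1_sig g x) -> f = g.
Proof.
  destruct f as [f Hf], g as [g Hg]; simpl; intros H.
  assert (f = g) by (apply functional_extensionality; auto). subst.
  f_equal. apply proof_irrelevance.
Qed.

(* In a completely regular space the sets [f < 1/2], f in C(X), form a base. *)
Lemma w_le_c_of_card_CX (X : Top) :
  completely_regular X -> card_le_c (CX X) -> w_le_c X.
Proof.
  intros Hcr Hc.
  exists (CX X), (fun f x => proj1_sig f x < 1/2). repeat split; [auto| |].
  - intros [f Hf]. apply open_sublevel; auto.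
  - intros U x HU Ux.
    destruct (Hcr (fun y => ~ U y) x) as [f [Hf [fx [f1 f01]]]]; [|tauto|].
    + apply (open_ext X U); auto. intro y; split; [tauto|apply NNPP].
    + exists (exist _ f Hf). simpl. split; [lra|].
      intros y Hy. apply NNPP; intro Hn. specialize (f1 y Hn). lra.
Qed.

(** * Compact Hausdorff spaces and Urysohn's lemma *)

Lemma list_choice (A B : Type) (Rl : A -> B -> Prop) (l : list A) :
  (forall a, In a l -> exists b, Rl a b) ->
  exists lb : list B, (forall b, In b lb -> exists a, In a l /\ Rl a b) /\
                      (forall a, In a l -> exists b, In b lb /\ Rl a b).
Proof.
  induction l as [|a l IH]; intros H.
  - exists nil; split; [intros b []| intros a []].
  - destruct (H a (or_introl eq_refl)) as [b Hb].
    destruct IH as [lb [H1 H2]]; [intros a' Ha'; apply H; right; auto|].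
    exists (b :: lb); split.
    + intros b' [<-|Hb']; [exists a; split; [left|]; auto|].
      destruct (H1 b' Hb') as [a' [? ?]]; exists a'; split; [right|]; auto.
    + intros a' [<-|Ha']; [exists b; split; [left|]; auto|].
      destruct (H2 a' Ha') as [b' [? ?]]; exists b'; split; [right|]; auto.
Qed.

Lemma list_filter_ex (A : Type) (P : A -> Prop) (l : list A) :
  exists l', (forall a, In a l' -> P a /\ In a l) /\ (forall a, In a l -> P a -> In a l').
Proof.
  induction l as [|a l [l' [H1 H2]]].
  - exists nil; split; [intros a []|intros a []].
  - destruct (classic (P a)) as [Pa|nPa]; [exists (a :: l') | exists l']; split.
    + intros b [<-|Hb]; [split; [auto|left; auto]|]. destruct (H1 b Hb); split; [|right]; auto.
    + intros b [<-|Hb] Pb; [left; auto|right; auto].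
    + intros b Hb. destruct (H1 b Hb); split; [|right]; auto.
    + intros b [<-|Hb] Pb; [contradiction|auto].
Qed.

Lemma compact_closed_subcover (K : Top) (W : K -> Prop) (Fam : (K -> Prop) -> Prop) :
  Defs.compact K -> isopen K W -> (forall U, Fam U -> isopen K U) ->
  (forall x, ~ W x -> exists U, Fam U /\ U x) ->
  exists l, (forall U, In U l -> Fam U) /\ (forall x, ~ W x -> exists U, In U l /\ U x).
Proof.
  intros Hc HW HF Hcov.
  destruct (Hc (fun U => Fam U \/ U = W)) as [l [Hl1 Hl2]].
  - intros U [HU| ->]; auto.
  - intro x. destruct (classic (W x)) as [Wx|nWx]; [exists W; auto|].
    destruct (Hcov x nWx) as [U [? ?]]; eauto.
  - destruct (list_filter_ex _ Fam l) as [l' [H1 H2]].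
    exists l'; split; [intros U HU; apply H1; auto|].
    intros x nWx. destruct (Hl2 x) as [U [HUl Ux]].
    destruct (Hl1 U HUl) as [FU| ->]; [|contradiction].
    exists U; split; auto.
Qed.

Definition disjoint (K : Top) (U V : K -> Prop) : Prop := forall x, U x -> V x -> False.

(* The closed set is the complement of [W]; a finite intersection of the opens
   around [B] remains open. *)
Lemma compact_separate (K : Top) (W B : K -> Prop) :
  Defs.compact K -> isopen K W ->
  (forall a, ~ W a -> exists U V, isopen K U /\ isopen K V /\ U a /\
                                  (forall y, B y -> V y) /\ disjoint K U V) ->
  exists U V, isopen K U /\ isopen K V /\ (forall y, ~ W y -> U y) /\
              (forall y, B y -> V y) /\ disjoint K U V.
Proof.
  intros Hc HW Hsep.
  destruct (compact_closed_subcover K W (fun U => isopen K U /\ exists V, isopen K V /\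
      (forall y, B y -> V y) /\ disjoint K U V) Hc HW) as [l [Hl1 Hl2]].
  - intros U [? _]; auto.
  - intros a Ha. destruct (Hsep a Ha) as [U [V [HU [HV [Ua [HBV HUV]]]]]].
    exists U; split; [split; [auto | exists V; auto] | auto].
  - destruct (list_choice _ _ (fun U V => isopen K V /\ (forall y, B y -> V y) /\
        disjoint K U V) l) as [lb [Hb1 Hb2]].
    { intros U HU. destruct (Hl1 U HU) as [_ [V HV]]. eauto. }
    exists (fun y => exists U, In U l /\ U y), (fun y => forall V, In V lb -> V y).
    repeat split.
    + apply open_list_exists. intros U HU. apply Hl1; auto.
    + apply open_list_forall. intros V HV. destruct (Hb1 V HV) as [U [_ [? _]]]; auto.
    + intros y Hy. destruct (Hl2 y Hy) as [U [? ?]]; eauto.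
    + intros y By V HV. destruct (Hb1 V HV) as [U [_ [_ [HBV _]]]]; auto.
    + intros y [U [HUl Uy]] HV. destruct (Hb2 U HUl) as [V [HVl [_ [_ Hd]]]].
      apply (Hd y Uy), HV, HVl.
Qed.

Lemma compact_hausdorff_regular (K : Top) (x : K) (W : K -> Prop) :
  Defs.compact K -> hausdorff K -> isopen K W -> W x ->
  exists U V, isopen K U /\ isopen K V /\ (forall y, ~ W y -> U y) /\ V x /\ disjoint K U V.
Proof.
  intros Hc Hh HW Wx.
  destruct (compact_separate K W (fun y => y = x) Hc HW) as [U [V [HU [HV [HWU [HV' Hd]]]]]].
  - intros a Ha. assert (Hax : a <> x) by (intros ->; contradiction).
    destruct (Hh a x Hax) as [U [V [HU [HV [Ua [Vx Hd]]]]]].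
    exists U, V; repeat split; auto; [intros y ->; auto | intros z Uz Vz; apply (Hd z); auto].
  - exists U, V; repeat split; auto.
Qed.

Lemma compact_hausdorff_normal (K : Top) (W1 W2 : K -> Prop) :
  Defs.compact K -> hausdorff K -> isopen K W1 -> isopen K W2 -> (forall x, W1 x \/ W2 x) ->
  exists U1 U2, isopen K U1 /\ isopen K U2 /\ (forall y, ~ W1 y -> U1 y) /\
     (forall y, ~ W2 y -> U2 y) /\ disjoint K U1 U2.
Proof.
  intros Hc Hh HW1 HW2 Hcov. apply compact_separate; auto.
  intros a Ha. assert (W2 a) by (destruct (Hcov a); tauto).
  destruct (compact_hausdorff_regular K a W2 Hc Hh HW2 H) as [V [U [HV [HU [HV2 [Ua Hd]]]]]].
  exists U, V; repeat split; auto. intros z Uz Vz. apply (Hd z); auto.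
Qed.

(* [well_inside K P Q]: the closure of [P] lies in [Q], witnessed by an open
   set disjoint from [P] which together with [Q] covers [K]. *)
Definition well_inside (K : Top) (P Q : K -> Prop) : Prop :=
  exists W, isopen K W /\ (forall x, P x -> ~ W x) /\ (forall x, W x \/ Q x).

Lemma well_inside_sub (K : Top) (P Q : K -> Prop) : well_inside K P Q -> forall x, P x -> Q x.
Proof. intros [W [_ [H1 H2]]] x Px. destruct (H2 x); auto. exfalso; apply (H1 x); auto. Qed.

Lemma well_inside_interpolate (K : Top) (P Q : K -> Prop) :
  Defs.compact K -> hausdorff K -> isopen K Q -> well_inside K P Q ->
  exists O, isopen K O /\ well_inside K P O /\ well_inside K O Q.
Proof.
  intros Hc Hh HQ [W [HW [H1 H2]]].
  destruct (compact_hausdorff_normal K W Q Hc Hh HW HQ H2)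
    as [U1 [U2 [HU1 [HU2 [HA [HB Hd]]]]]].
  exists U1; split; [exact HU1 | split].
  - exists W; split; [exact HW | split; [exact H1|]].
    intro x. destruct (classic (W x)); auto.
  - exists U2; split; [exact HU2 | split].
    + intros x U1x U2x. apply (Hd x); auto.
    + intro x. destruct (classic (Q x)); auto.
Qed.

Lemma pow2_pos (n : nat) : 0 < 2 ^ n.
Proof. apply pow_lt. lra. Qed.

Lemma INR_pow2 (n : nat) : INR (2 ^ n) = 2 ^ n.
Proof. rewrite pow_INR. reflexivity. Qed.

Lemma dyadic_le_nat (k n k' n' : nat) :
  INR k / 2 ^ n <= INR k' / 2 ^ n' -> (k * 2 ^ n' <= k' * 2 ^ n)%nat.
Proof.
  intros H. apply INR_le. rewrite !mult_INR, !INR_pow2.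
  pose proof (pow2_pos n). pose proof (pow2_pos n').
  apply (Rmult_le_compat_r (2 ^ n * 2 ^ n')) in H; [|nra].
  replace (INR k / 2 ^ n * (2 ^ n * 2 ^ n')) with (INR k * 2 ^ n') in H by (field; lra).
  replace (INR k' / 2 ^ n' * (2 ^ n * 2 ^ n')) with (INR k' * 2 ^ n) in H by (field; lra).
  exact H.
Qed.

Lemma dyadic_le_1 (k n : nat) : (k <= 2 ^ n)%nat -> INR k / 2 ^ n <= 1.
Proof.
  intros H. apply le_INR in H. rewrite INR_pow2 in H. pose proof (pow2_pos n).
  apply (Rmult_le_reg_r (2 ^ n)); auto. unfold Rdiv. rewrite Rmult_assoc, Rinv_l; lra.
Qed.

Lemma dyadic_nonneg (k n : nat) : 0 <= INR k / 2 ^ n.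
Proof.
  pose proof (pos_INR k). pose proof (pow2_pos n).
  apply Rmult_le_pos; [lra | left; apply Rinv_0_lt_compat; lra].
Qed.

Lemma dyadic_S (k n : nat) : INR (S k) / 2 ^ n = INR k / 2 ^ n + 1 / 2 ^ n.
Proof. rewrite S_INR. pose proof (pow2_pos n). field. lra. Qed.

Lemma dyadic_floor (t : R) (n : nat) : 0 <= t <= 1 ->
  exists k, (k <= 2 ^ n)%nat /\ INR k / 2 ^ n <= t < INR k / 2 ^ n + 1 / 2 ^ n.
Proof.
  intros Ht. pose proof (pow2_pos n) as Hp.
  set (m := Int_part (t * 2 ^ n)).
  destruct (base_Int_part (t * 2 ^ n)) as [H1 H2]. fold m in H1, H2.
  assert (Hm : (0 <= m)%Z).
  { assert (Hlt : (-1 < m)%Z) by (apply lt_IZR; nra). lia. }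
  exists (Z.to_nat m). rewrite INR_IZR_INZ, Z2Nat.id by exact Hm. split.
  - apply INR_le. rewrite INR_pow2, INR_IZR_INZ, Z2Nat.id by exact Hm. nra.
  - split; [apply (Rmult_le_reg_r (2 ^ n)) | apply (Rmult_lt_reg_r (2 ^ n))];
      auto; field_simplify; lra.
Qed.

Lemma small_pow2 (eps : R) : 0 < eps -> exists n, 3 / 2 ^ n < eps.
Proof.
  intros He. destruct (archimed_cor1 (eps / 3)) as [N [HN HN0]]; [lra|].
  exists N. assert (HNp : INR N <= 2 ^ N).
  { clear. induction N as [|N IH]; [simpl; lra|]. rewrite S_INR, <- tech_pow_Rmult.
    assert (1 <= 2 ^ N) by (apply pow_R1_Rle; lra). lra. }
  assert (0 < INR N) by (apply lt_0_INR; auto).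
  assert (/ 2 ^ N <= / INR N) by (apply Rinv_le_contravar; auto). unfold Rdiv. lra.
Qed.

Section Urysohn.
Variable K : Top.
Hypotheses (HKc : Defs.compact K) (HKh : hausdorff K).

Definition interpolant (P Q : K -> Prop) : K -> Prop :=
  epsilon (inhabits (fun _ : K => True))
    (fun O => isopen K O /\
       (isopen K Q -> well_inside K P Q -> well_inside K P O /\ well_inside K O Q)).

Lemma interpolant_prop (P Q : K -> Prop) :
  isopen K (interpolant P Q) /\ (isopen K Q -> well_inside K P Q ->
    well_inside K P (interpolant P Q) /\ well_inside K (interpolant P Q) Q).
Proof.
  unfold interpolant. apply epsilon_spec.
  destruct (classic (isopen K Q /\ well_inside K P Q)) as [[HQ HPQ]|Hn].
  - destruct (well_inside_interpolate K P Q HKc HKh HQ HPQ) as [O HO]. exists O; tauto.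
  - exists (fun _ => True); split; [apply open_full | tauto].
Qed.

Variables (P0 U : K -> Prop).
Hypotheses (HP0 : isopen K P0) (HU : isopen K U) (HP0U : well_inside K P0 U).

(* [dyadic n k] is the open set attached to the dyadic k/2^n in the usual
   proof of Urysohn's lemma: it is [P0] at 0 and [U] at 1. *)
Fixpoint dyadic (n k : nat) : K -> Prop :=
  match n with
  | O => if Nat.eqb k 0 then P0 else U
  | S m => if Nat.even k then dyadic m (Nat.div2 k)
           else interpolant (dyadic m (Nat.div2 k)) (dyadic m (S (Nat.div2 k)))
  end.

Lemma dyadic_double (n m : nat) : dyadic (S n) (2 * m) = dyadic n m.
Proof. cbn [dyadic]. rewrite Nat.even_even, Nat.div2_double. reflexivity. Qed.

Lemma dyadic_double_succ (n m : nat) :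
  dyadic (S n) (2 * m + 1) = interpolant (dyadic n m) (dyadic n (S m)).
Proof. cbn [dyadic]. rewrite Nat.even_odd, Nat.div2_odd'. reflexivity. Qed.

Lemma dyadic_refine (j n k : nat) : dyadic (n + j) (k * 2 ^ j) = dyadic n k.
Proof.
  revert n k; induction j as [|j IH]; intros n k.
  - rewrite Nat.add_0_r, Nat.mul_1_r. reflexivity.
  - replace (n + S j)%nat with (S (n + j)) by lia.
    replace (k * 2 ^ S j)%nat with (2 * (k * 2 ^ j))%nat by (simpl; lia).
    rewrite dyadic_double. apply IH.
Qed.

Lemma dyadic_open (n k : nat) : isopen K (dyadic n k).
Proof.
  revert k; induction n as [|n IH]; intro k; simpl.
  - destruct (Nat.eqb k 0); auto.
  - destruct (Nat.even k); [auto | apply interpolant_prop].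
Qed.

Lemma dyadic_well_inside (n k : nat) : (k < 2 ^ n)%nat ->
  well_inside K (dyadic n k) (dyadic n (S k)).
Proof.
  revert k; induction n as [|n IH]; intros k Hk.
  - simpl in Hk. replace k with 0%nat by lia. exact HP0U.
  - simpl in Hk. destruct (Nat.Even_or_Odd k) as [[m ->]|[m ->]].
    + rewrite dyadic_double. replace (S (2 * m)) with (2 * m + 1)%nat by lia.
      rewrite dyadic_double_succ.
      apply interpolant_prop; [apply dyadic_open | apply IH; lia].
    + rewrite dyadic_double_succ. replace (S (2 * m + 1)) with (2 * S m)%nat by lia.
      rewrite dyadic_double.
      apply interpolant_prop; [apply dyadic_open | apply IH; lia].
Qed.

Lemma dyadic_mono (n k k' : nat) : (k <= k' <= 2 ^ n)%nat ->
  forall x, dyadic n k x -> dyadic n k' x.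
Proof.
  intros [Hkk' Hk']. induction Hkk' as [|k' Hk IH]; intros x Hx; auto.
  apply (well_inside_sub K _ _ (dyadic_well_inside n k' ltac:(lia))). apply IH; auto. lia.
Qed.

Lemma dyadic_le (n k n' k' : nat) :
  (k' <= 2 ^ n')%nat -> INR k / 2 ^ n <= INR k' / 2 ^ n' ->
  forall x, dyadic n k x -> dyadic n' k' x.
Proof.
  intros Hk' Hle x Hx. apply dyadic_le_nat in Hle.
  rewrite <- (dyadic_refine n' n k) in Hx. rewrite <- (dyadic_refine n n' k').
  replace (n' + n)%nat with (n + n')%nat by lia.
  apply (dyadic_mono (n + n') (k * 2 ^ n')); auto.
  rewrite Nat.pow_add_r, (Nat.mul_comm (2 ^ n)). split; [auto | apply Nat.mul_le_mono_r; auto].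
Qed.

(* [urysohn_fun z] is the supremum of the dyadics whose open set misses [z];
   0 is added so that the set is never empty. *)
Definition below (z : K) (r : R) : Prop :=
  r = 0 \/ exists n k, (k <= 2 ^ n)%nat /\ r = INR k / 2 ^ n /\ ~ dyadic n k z.

Lemma below_bound (z : K) : bound (below z).
Proof. exists 1. intros r [->|[n [k [Hk [-> _]]]]]; [lra | apply dyadic_le_1; auto]. Qed.

Definition urysohn_fun (z : K) : R :=
  proj1_sig (completeness _ (below_bound z) (ex_intro _ 0 (or_introl eq_refl))).

Lemma urysohn_fun_lub (z : K) : is_lub (below z) (urysohn_fun z).
Proof. unfold urysohn_fun. destruct (completeness _ _ _) as [m Hm]. exact Hm. Qed.

Lemma urysohn_fun_range (z : K) : 0 <= urysohn_fun z <= 1.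
Proof.
  destruct (urysohn_fun_lub z) as [H1 H2]. split.
  - apply H1. left; auto.
  - apply H2. intros r [->|[n [k [Hk [-> _]]]]]; [lra | apply dyadic_le_1; auto].
Qed.

Lemma urysohn_fun_ge (z : K) (n k : nat) : (k <= 2 ^ n)%nat -> ~ dyadic n k z ->
  INR k / 2 ^ n <= urysohn_fun z.
Proof. intros Hk Hn. apply (urysohn_fun_lub z). right. exists n, k. auto. Qed.

Lemma urysohn_fun_le (z : K) (n k : nat) : dyadic n k z -> urysohn_fun z <= INR k / 2 ^ n.
Proof.
  intros Hz. apply (urysohn_fun_lub z). intros r [->|[n' [k' [Hk' [-> Hn]]]]].
  - apply dyadic_nonneg.
  - apply Rnot_lt_le; intro Hlt. apply Hn, (dyadic_le n k); auto. lra.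
Qed.

Lemma urysohn_fun_upper_nbhd (z : K) (n k : nat) :
  (k <= 2 ^ n)%nat -> urysohn_fun z < INR k / 2 ^ n ->
  exists W, isopen K W /\ W z /\ forall w, W w -> urysohn_fun w <= INR k / 2 ^ n.
Proof.
  intros Hk Hz. exists (dyadic n k). split; [apply dyadic_open | split].
  - apply NNPP; intro Hn. pose proof (urysohn_fun_ge z n k Hk Hn). lra.
  - intros w Hw. apply urysohn_fun_le; auto.
Qed.

Lemma urysohn_fun_lower_nbhd (z : K) (n k : nat) :
  (k < 2 ^ n)%nat -> INR (S k) / 2 ^ n < urysohn_fun z ->
  exists W, isopen K W /\ W z /\ forall w, W w -> INR k / 2 ^ n <= urysohn_fun w.
Proof.
  intros Hk Hz. destruct (dyadic_well_inside n k Hk) as [W [HW [HdW HWd]]].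
  exists W. split; [exact HW | split].
  - destruct (HWd z) as [Wz|Dz]; auto.
    pose proof (urysohn_fun_le z n (S k) Dz). lra.
  - intros w Ww. apply urysohn_fun_ge; [lia|]. intros Dw. exact (HdW w Dw Ww).
Qed.

Lemma urysohn_fun_continuous : continuous_R K urysohn_fun.
Proof.
  intros z eps Heps.
  destruct (small_pow2 eps Heps) as [n Hn]. pose proof (pow2_pos n) as Hp.
  assert (Hsmall : 0 < 1 / 2 ^ n) by (apply Rdiv_lt_0_compat; lra).
  assert (H3 : 3 / 2 ^ n = 3 * (1 / 2 ^ n)) by (field; lra).
  set (t := urysohn_fun z).
  destruct (dyadic_floor t n (urysohn_fun_range z)) as [k [Hk [Hkt Htk]]].
  assert (Hup : exists W, isopen K W /\ W z /\ forall w, W w -> urysohn_fun w < t + eps).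
  { destruct (Nat.le_gt_cases (S k) (2 ^ n)) as [Hs|Hs].
    - destruct (urysohn_fun_upper_nbhd z n (S k) Hs) as [W [HW [Wz HWw]]];
        [rewrite dyadic_S; exact Htk|].
      exists W; repeat split; auto. intros w Hw. specialize (HWw w Hw).
      rewrite dyadic_S in HWw. lra.
    - exists (fun _ => True); repeat split; [apply open_full|].
      intros w _. pose proof (urysohn_fun_range w).
      replace k with (2 ^ n)%nat in Hkt by lia. rewrite INR_pow2 in Hkt.
      unfold Rdiv in Hkt. rewrite Rinv_r in Hkt; lra. }
  assert (Hlow : exists W, isopen K W /\ W z /\ forall w, W w -> t - eps < urysohn_fun w).
  { destruct k as [|[|k]].
    - exists (fun _ => True); repeat split; [apply open_full|].
      intros w _. pose proof (urysohn_fun_range w). simpl in Htk. unfold Rdiv in Htk. lra.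
    - exists (fun _ => True); repeat split; [apply open_full|].
      intros w _. pose proof (urysohn_fun_range w). simpl in Htk. unfold Rdiv in *. lra.
    - destruct (urysohn_fun_lower_nbhd z n k ltac:(lia)) as [W [HW [Wz HWw]]].
      { fold t. rewrite dyadic_S in Hkt. lra. }
      exists W; repeat split; auto. intros w Hw. specialize (HWw w Hw).
      rewrite !dyadic_S in Htk. lra. }
  destruct Hup as [W1 [HW1 [W1z H1]]], Hlow as [W2 [HW2 [W2z H2]]].
  exists (fun w => W1 w /\ W2 w). split; [apply open_inter; auto | split; auto].
  intros w [Hw1 Hw2]. specialize (H1 w Hw1). specialize (H2 w Hw2). apply Rabs_def1; lra.
Qed.

End Urysohn.

Lemma urysohn (K : Top) (z : K) (V : K -> Prop) :
  Defs.compact K -> hausdorff K -> isopen K V -> V z ->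
  exists g : K -> R, continuous_R K g /\ g z = 0 /\ forall w, ~ V w -> g w = 1.
Proof.
  intros Hc Hh HV Vz.
  destruct (compact_hausdorff_normal K (fun y => y <> z) V Hc Hh
    (T1_open_neq K z (hausdorff_T1 K Hh)) HV) as [U1 [U2 [HU1 [HU2 [H1 [H2 Hd]]]]]].
  { intro x. destruct (classic (x = z)) as [->|]; auto. }
  assert (Hwi : well_inside K U1 V).
  { exists U2; split; [exact HU2 | split].
    - intros x U1x U2x. apply (Hd x); auto.
    - intro x. destruct (classic (V x)); auto. }
  exists (urysohn_fun K U1 V). split; [apply urysohn_fun_continuous; auto | split].
  - assert (Hz : U1 z) by (apply H1; tauto).
    pose proof (urysohn_fun_le K Hc Hh U1 V HU1 HV Hwi z 0 0 Hz). pose proof (urysohn_fun_range K U1 V z).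
    simpl in *. lra.
  - intros w nVw. pose proof (urysohn_fun_ge K U1 V w 0 1 ltac:(simpl; lia) nVw).
    pose proof (urysohn_fun_range K U1 V w). simpl in *. lra.
Qed.

(** * Weight of a compactification *)

(* Some continuous extension of [f] along [e] when one exists, junk otherwise. *)
Definition extension (X K : Top) (e : X -> K) (f : X -> R) : K -> R :=
  epsilon (inhabits (fun _ : K => 0))
    (fun g => continuous_R K g /\
       ((exists h, continuous_R K h /\ forall x, h (e x) = f x) -> forall x, g (e x) = f x)).

Lemma extension_spec (X K : Top) (e : X -> K) (f : X -> R) :
  continuous_R K (extension X K e f) /\
  ((exists h, continuous_R K h /\ forall x, h (e x) = f x) ->
   forall x, extension X K e f (e x) = f x).
Proof.
  unfold extension. apply epsilon_spec.
  destruct (classic (exists h, continuous_R K h /\ forall x, h (e x) = f x))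
    as [[h [Hh1 Hh2]]|Hn].
  - exists h; split; auto.
  - exists (fun _ => 0); split; [apply continuous_R_const | intros; contradiction].
Qed.

(* By Urysohn's lemma, the sets [g < 1/2] with g continuous on K form a base;
   each such g is determined by its restriction to the dense image of X. *)
Lemma w_le_c_of_compactification (X K : Top) (e : X -> K) :
  compactification X K e -> card_le_c (CX X) -> w_le_c K.
Proof.
  intros [Hc [Hh [[He _] Hd]]] HC.
  exists (CX X), (fun f w => extension X K e (proj1_sig f) w < 1/2). repeat split; [auto| |].
  - intro f. apply open_sublevel, extension_spec.
  - intros V z HV Vz.
    destruct (urysohn K z V Hc Hh HV Vz) as [g [Hg [gz g1]]].
    set (f := exist (continuous_R X) (fun x => g (e x)) (continuous_R_comp X K e g He Hg)).
    assert (Heq : forall w, extension X K e (proj1_sig f) w = g w).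
    { apply (continuous_R_dense_eq K (fun w => exists x, e x = w)); auto.
      - apply extension_spec.
      - intros w [x <-]. apply extension_spec. exists g; split; auto. }
    exists f. rewrite Heq. split; [lra|].
    intros w Hw. rewrite Heq in Hw. apply NNPP; intro nV. rewrite (g1 w nV) in Hw. lra.
Qed.

(** * The cardinality of C(X) *)

Lemma embedding_open (Y L : Top) (e : Y -> L) : embedding Y L e ->
  forall (O : Y -> Prop), isopen Y O -> exists V, isopen L V /\ forall y, O y <-> V (e y).
Proof. intros [_ [_ H]]. exact H. Qed.

Section CardinalityOfCX.

Variables (X : Top) (I : Type) (N : I -> X -> Prop).
Hypothesis HX : tychonoff X.
Hypothesis HN : forall U x, isopen X U -> U x -> exists i, N i x /\ forall y, N i y -> U y.

Definition separates (i j : I) (g : X -> R) : Prop :=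
  continuous_R X g /\ (forall a, N i a -> g a < 1/3) /\ (forall b, N j b -> 2/3 < g b).

Definition separator (ij : I * I) : X -> R :=
  epsilon (inhabits (fun _ : X => 0))
    (fun g => continuous_R X g /\
       ((exists h, separates (fst ij) (snd ij) h) -> separates (fst ij) (snd ij) g)).

Lemma separator_spec (ij : I * I) : continuous_R X (separator ij) /\
  ((exists h, separates (fst ij) (snd ij) h) -> separates (fst ij) (snd ij) (separator ij)).
Proof.
  unfold separator. apply epsilon_spec.
  destruct (classic (exists h, separates (fst ij) (snd ij) h)) as [[h Hh]|Hn].
  - exists h. split; [apply Hh | auto].
  - exists (fun _ => 0). split; [apply continuous_R_const | intros; contradiction].
Qed.

Lemma separator_continuous (ij : I * I) : continuous_R X (separator ij).
Proof. exact (proj1 (separator_spec ij)). Qed.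

Lemma separator_points (x p : X) : x <> p ->
  exists ij, separator ij x < 1/3 /\ 2/3 < separator ij p.
Proof.
  intros Hxp. destruct HX as [HT1 Hcr].
  destruct (Hcr (fun y => y = p) x) as [h [Hh [hx [hp h01]]]];
    [apply T1_open_neq, HT1 | exact Hxp |].
  destruct (HN (fun y => h y < 1/3) x (open_sublevel X h _ Hh)) as [i [Ni Hi]]; [lra|].
  destruct (HN (fun y => 2/3 < h y) p (open_superlevel X h _ Hh)) as [j [Nj Hj]].
  { rewrite (hp p eq_refl). lra. }
  destruct (proj2 (separator_spec (i, j))) as [_ [Hsi Hsj]].
  { exists h. repeat split; auto. }
  exists (i, j). split; [apply Hsi | apply Hsj]; auto.
Qed.

Definition basic_open (l : list (I * I)) (x : X) : Prop :=
  forall ij, In ij l -> separator ij x < 1/2.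
Definition basic_closed (l : list (I * I)) (x : X) : Prop :=
  forall ij, In ij l -> separator ij x <= 1/2.
Definition basic_union (Ls : list (list (I * I))) (x : X) : Prop :=
  exists l, In l Ls /\ basic_open l x.
Definition basic_union_closed (Ls : list (list (I * I))) (x : X) : Prop :=
  exists l, In l Ls /\ basic_closed l x.

Lemma basic_union_open (Ls : list (list (I * I))) : isopen X (basic_union Ls).
Proof.
  apply open_list_exists. intros l _. apply open_list_forall. intros ij _.
  apply open_sublevel, separator_continuous.
Qed.

Lemma basic_union_closed_compl_open (Ls : list (list (I * I))) :
  isopen X (fun x => ~ basic_union_closed Ls x).
Proof.
  apply (open_ext X (fun x => forall l, In l Ls -> exists ij, In ij l /\ 1/2 < separator ij x)).
  - intro x; split.
    + intros H [l [Hl Hb]]. destruct (H l Hl) as [ij [Hij Hp]]. specialize (Hb ij Hij). lra.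
    + intros H l Hl. apply NNPP; intro Hn. apply H. exists l; split; auto.
      intros ij Hij. apply Rnot_lt_le. intro Hlt. apply Hn. eauto.
  - apply open_list_forall. intros l _. apply open_list_exists. intros ij _.
    apply open_superlevel, separator_continuous.
Qed.

Lemma basic_union_closed_of_union (Ls : list (list (I * I))) (x : X) :
  basic_union Ls x -> basic_union_closed Ls x.
Proof. intros [l [Hl Hb]]. exists l. split; auto. intros ij Hij. left; auto. Qed.

Variables (D : X -> Prop) (L : Top) (e : subspace X D -> L) (J : Type) (F : J -> L -> Prop).
Hypotheses (HL : Defs.compact L) (He : embedding (subspace X D) L e)
  (HF : forall j, isclosed L (F j)).
Hypothesis Hnag : forall (y : subspace X D) (z : L),
  ~ (exists y', e y' = z) -> exists j, F j (e y) /\ ~ F j z.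

(* The fiber of [y]: the intersection of the [F j] containing [e y]; it is a
   compact subset of L and, by the Nagami condition, lies inside [e D]. *)
Definition fiber (y : subspace X D) (z : L) : Prop := forall j, F j (e y) -> F j z.

Lemma fiber_in_image (y : subspace X D) (z : L) : fiber y z -> exists p, e p = z.
Proof. intros Hz. apply NNPP; intro H. destruct (Hnag y z H) as [j [H1 H2]]. auto. Qed.

Lemma fiber_finite_subcover (y : subspace X D) (O : X -> Prop) (Fam : (X -> Prop) -> Prop) :
  isopen X O -> (forall U, Fam U -> isopen X U) ->
  (forall p, fiber y (e p) -> ~ O (proj1_sig p) -> exists U, Fam U /\ U (proj1_sig p)) ->
  exists (s : list J) (l : list (X -> Prop)),
    (forall j, In j s -> F j (e y)) /\ (forall U, In U l -> Fam U) /\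
    forall p, (forall j, In j s -> F j (e p)) ->
      O (proj1_sig p) \/ exists U, In U l /\ U (proj1_sig p).
Proof.
  intros HO HFam Hcov.
  set (trace := fun (U : X -> Prop) (V : L -> Prop) =>
    isopen L V /\ forall q : subspace X D, U (proj1_sig q) <-> V (e q)).
  assert (Htrace : forall U, isopen X U -> exists V, trace U V).
  { intros U HU. apply (embedding_open _ _ e He (fun q => U (proj1_sig q))).
    exists U. split; [exact HU | tauto]. }
  destruct (Htrace O HO) as [VO [HVO EVO]].
  set (outside := fun V => exists j, F j (e y) /\ V = fun z => ~ F j z).
  set (covering := fun V => exists U, Fam U /\ trace U V).
  destruct (HL (fun V => outside V \/ V = VO \/ covering V)) as [l [Hl1 Hl2]].
  - intros V [[j [_ ->]]|[-> | [U [_ [? _]]]]]; auto. apply HF.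
  - intro z. destruct (classic (exists j, F j (e y) /\ ~ F j z)) as [[j [H1 H2]]|Hn].
    + exists (fun z => ~ F j z). split; [left; exists j; auto | auto].
    + assert (Hz : fiber y z) by (intros j Hj; apply NNPP; intro; apply Hn; eauto).
      destruct (fiber_in_image y z Hz) as [p <-].
      destruct (classic (O (proj1_sig p))) as [Op|nOp].
      * exists VO. split; [right; left; auto | apply EVO; auto].
      * destruct (Hcov p Hz nOp) as [U [FU Up]].
        destruct (Htrace U (HFam U FU)) as [V [HV EV]].
        exists V. split; [right; right; exists U; split; [|split]; auto | apply EV; auto].
  - destruct (list_filter_ex _ outside l) as [lo [Ho1 Ho2]].
    destruct (list_choice _ _ (fun V j => F j (e y) /\ V = fun z => ~ F j z) lo)
      as [s [Hs1 Hs2]]; [intros V HV; apply Ho1; auto|].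
    destruct (list_filter_ex _ covering l) as [lc [Hc1 Hc2]].
    destruct (list_choice _ _ (fun V U => Fam U /\ trace U V) lc) as [lU [HU1 HU2]];
      [intros V HV; apply Hc1; auto|].
    exists s, lU. split; [|split].
    + intros j Hj. destruct (Hs1 j Hj) as [V [_ [? _]]]; auto.
    + intros U HU. destruct (HU1 U HU) as [V [_ [? _]]]; auto.
    + intros p Hp. destruct (Hl2 (e p)) as [V [HVl HVp]].
      destruct (Hl1 V HVl) as [Ho|[-> | Hcv]].
      * exfalso. destruct (Hs2 V (Ho2 V HVl Ho)) as [j [Hj [_ ->]]]. apply HVp, Hp, Hj.
      * left. apply EVO; auto.
      * right. destruct (HU2 V (Hc2 V HVl Hcv)) as [U [HUl [_ [_ EU]]]].
        exists U; split; auto. apply EU; auto.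
Qed.

Lemma fiber_subcover (y : subspace X D) (O : X -> Prop) (Fam : (X -> Prop) -> Prop) :
  isopen X O -> (forall U, Fam U -> isopen X U) ->
  (forall p, fiber y (e p) -> ~ O (proj1_sig p) -> exists U, Fam U /\ U (proj1_sig p)) ->
  exists l, (forall U, In U l -> Fam U) /\
    forall p, fiber y (e p) -> ~ O (proj1_sig p) -> exists U, In U l /\ U (proj1_sig p).
Proof.
  intros HO HFam Hcov.
  destruct (fiber_finite_subcover y O Fam HO HFam Hcov) as [s [l [Hs [Hl Hcover]]]].
  exists l. split; auto. intros p Hp nOp.
  destruct (Hcover p) as [?|?]; [intros j Hj; apply Hp, Hs, Hj | contradiction | auto].
Qed.

Lemma basic_nbhd_in_fiber (y : subspace X D) (O : X -> Prop) (q : subspace X D) :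
  isopen X O -> fiber y (e q) -> O (proj1_sig q) ->
  exists l, basic_open l (proj1_sig q) /\
    forall r, fiber y (e r) -> basic_closed l (proj1_sig r) -> O (proj1_sig r).
Proof.
  intros HO Hq Oq.
  set (sep := fun U ij => separator ij (proj1_sig q) < 1/2 /\ U = fun x => 1/2 < separator ij x).
  destruct (fiber_subcover y O (fun U => exists ij, sep U ij) HO) as [lU [H1 H2]].
  - intros U [ij [_ ->]]. apply open_superlevel, separator_continuous.
  - intros r Hr nOr. assert (Hne : proj1_sig q <> proj1_sig r) by (intro E; rewrite <- E in nOr; auto).
    destruct (separator_points _ _ Hne) as [ij [H1 H2]].
    exists (fun x => 1/2 < separator ij x). split; [exists ij; split; [lra | auto] | lra].
  - destruct (list_choice _ _ sep lU) as [l [Hl1 Hl2]]; [intros U HU; apply H1; auto|].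
    exists l. split.
    + intros ij Hij. destruct (Hl1 ij Hij) as [U [_ [? _]]]; auto.
    + intros r Hr Hbar. apply NNPP; intro nOr. destruct (H2 r Hr nOr) as [U [HUl HUr]].
      destruct (Hl2 U HUl) as [ij [Hij [_ ->]]]. specialize (Hbar ij Hij). simpl in HUr. lra.
Qed.

Lemma basic_union_in_fiber (y : subspace X D) (W O : X -> Prop) :
  isopen X W -> isopen X O -> (forall x, W x \/ O x) ->
  exists Ls, (forall q, fiber y (e q) -> ~ W (proj1_sig q) -> basic_union Ls (proj1_sig q)) /\
    forall r, fiber y (e r) -> basic_union_closed Ls (proj1_sig r) -> O (proj1_sig r).
Proof.
  intros HW HO Hcov.
  set (good := fun l => forall r, fiber y (e r) -> basic_closed l (proj1_sig r) -> O (proj1_sig r)).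
  destruct (fiber_subcover y W (fun U => exists l, good l /\ U = basic_open l) HW)
    as [lU [H1 H2]].
  - intros U [l [_ ->]]. apply (open_ext X (basic_union (l :: nil))); [|apply basic_union_open].
    intro x; split; [intros [l' [[<-|[]] Hx]]; auto | intros Hx; exists l; split; [left|]; auto].
  - intros q Hq nWq. assert (Oq : O (proj1_sig q)) by (destruct (Hcov (proj1_sig q)); tauto).
    destruct (basic_nbhd_in_fiber y O q HO Hq Oq) as [l [Hl1 Hl2]].
    exists (basic_open l). split; [exists l; auto | auto].
  - destruct (list_choice _ _ (fun U l => good l /\ U = basic_open l) lU) as [Ls [HL1 HL2]];
      [intros U HU; apply H1; auto|].
    exists Ls. split.
    + intros q Hq nWq. destruct (H2 q Hq nWq) as [U [HUl HUq]].
      destruct (HL2 U HUl) as [l [Hl [_ ->]]]. exists l; auto.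
    + intros r Hr [l [Hl Hbar]]. destruct (HL1 l Hl) as [U [_ [Hg _]]]. apply (Hg r Hr Hbar).
Qed.

(* Compactness of the fiber spreads [basic_union_in_fiber] to a neighbourhood
   [F_s] of the fiber. *)
Lemma basic_union_sandwich (y : subspace X D) (W O : X -> Prop) :
  isopen X W -> isopen X O -> (forall x, W x \/ O x) ->
  exists (s : list J) Ls, (forall j, In j s -> F j (e y)) /\
    forall x : subspace X D, (forall j, In j s -> F j (e x)) ->
      (~ W (proj1_sig x) -> basic_union Ls (proj1_sig x)) /\
      (basic_union Ls (proj1_sig x) -> O (proj1_sig x)).
Proof.
  intros HW HO Hcov.
  destruct (basic_union_in_fiber y W O HW HO Hcov) as [Ls [HLs1 HLs2]].
  set (G := fun x => (W x \/ basic_union Ls x) /\ (~ basic_union_closed Ls x \/ O x)).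
  assert (HG : isopen X G).
  { apply open_inter; apply open_or; auto;
      [apply basic_union_open | apply basic_union_closed_compl_open]. }
  destruct (fiber_finite_subcover y G (fun _ => False) HG) as [s [l [Hs [Hl Hcover]]]].
  - intros U [].
  - intros p Hp nGp. exfalso. apply nGp. split.
    + destruct (classic (W (proj1_sig p))); [left | right; apply HLs1]; auto.
    + destruct (classic (basic_union_closed Ls (proj1_sig p))) as [Hb|Hb];
        [right; apply HLs2 | left]; auto.
  - exists s, Ls. split; auto. intros x Hx.
    destruct (Hcover x Hx) as [[G1 G2] | [U [HU _]]]; [|destruct (Hl U HU)].
    split.
    + intros nW. destruct G1; [contradiction | auto].
    + intros Hb. destruct G2 as [G2|G2]; auto.
      exfalso. apply G2, basic_union_closed_of_union, Hb.
Qed.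

Definition approximates (f : X -> R) (s : list J) (a b a' b' : R)
  (Ls : list (list (I * I))) : Prop :=
  forall x : subspace X D, (forall j, In j s -> F j (e x)) ->
    (a <= f (proj1_sig x) <= b -> basic_union Ls (proj1_sig x)) /\
    (basic_union Ls (proj1_sig x) -> a' < f (proj1_sig x) < b').

Lemma approximation_exists (f : X -> R) (y : subspace X D) (a b a' b' : R) :
  continuous_R X f -> a' < a -> b < b' ->
  exists s, (forall j, In j s -> F j (e y)) /\ exists Ls, approximates f s a b a' b' Ls.
Proof.
  intros Hf Ha Hb.
  destruct (basic_union_sandwich y (fun x => f x < a \/ b < f x) (fun x => a' < f x < b'))
    as [s [Ls [Hs HLs]]].
  - apply open_or; [apply open_sublevel | apply open_superlevel]; auto.
  - apply open_inter; [apply open_superlevel | apply open_sublevel]; auto.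
  - intro x. destruct (Rlt_or_le (f x) a); [left; left; auto|].
    destruct (Rlt_or_le b (f x)); [left; right; auto | right; lra].
  - exists s. split; auto. exists Ls. intros x Hx. destruct (HLs x Hx) as [H1 H2].
    split; [intros Hfx; apply H1; lra | exact H2].
Qed.

Definition mesh (m : nat) : R := / (INR m + 1).

Lemma mesh_pos (m : nat) : 0 < mesh m.
Proof. unfold mesh. apply Rinv_0_lt_compat. pose proof (pos_INR m). lra. Qed.

(* The code of [f] at [(s, (z, m))] records an [Ls] approximating [f] on [F_s]
   for the interval [z, z + 1] mesh m with margin mesh m. *)
Definition grid_approximates (f : CX X) (p : list J * (Z * nat))
  (Ls : list (list (I * I))) : Prop :=
  let '(s, (z, m)) := p in
  approximates (proj1_sig f) s (IZR z * mesh m) ((IZR z + 1) * mesh m)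
    ((IZR z - 1) * mesh m) ((IZR z + 2) * mesh m) Ls.

Definition CX_code (f : CX X) (p : list J * (Z * nat)) : option (list (list (I * I))) :=
  match excluded_middle_informative (exists Ls, grid_approximates f p Ls) with
  | left H => Some (proj1_sig (constructive_indefinite_description _ H))
  | right _ => None
  end.

Lemma CX_code_sound (f : CX X) (p : list J * (Z * nat)) Ls :
  CX_code f p = Some Ls -> grid_approximates f p Ls.
Proof.
  unfold CX_code. destruct (excluded_middle_informative _) as [H|]; [|discriminate].
  destruct (constructive_indefinite_description _ H) as [Ls' HLs']. simpl.
  intros E. injection E as <-. exact HLs'.
Qed.

Lemma CX_code_defined (f : CX X) (p : list J * (Z * nat)) :
  (exists Ls, grid_approximates f p Ls) -> exists Ls, CX_code f p = Some Ls.
Proof.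
  intros H. unfold CX_code. destruct (excluded_middle_informative _); [eauto | contradiction].
Qed.

Lemma CX_code_inj (f g : CX X) : dense X D -> CX_code f = CX_code g -> f = g.
Proof.
  intros HD Hfg. apply CX_ext.
  apply (continuous_R_dense_eq X D); [auto | apply (proj2_sig f) | apply (proj2_sig g) |].
  intros x Dx. set (y := exist D x Dx : subspace X D).
  apply eq_sym, cond_eq. intros eps Heps.
  destruct (archimed_cor1 (eps / 3)) as [m [Hm Hm0]]; [lra|].
  assert (Hd3 : 3 * mesh (pred m) < eps).
  { unfold mesh. replace (INR (pred m) + 1) with (INR m)
      by (destruct m; [lia | rewrite S_INR; simpl; ring]). lra. }
  pose proof (mesh_pos (pred m)) as Hd.
  set (d := mesh (pred m)) in *.
  set (z := Int_part (proj1_sig f x / d)).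
  destruct (base_Int_part (proj1_sig f x / d)) as [Hz1 Hz2]. fold z in Hz1, Hz2.
  assert (Hfx : IZR z * d <= proj1_sig f x <= (IZR z + 1) * d).
  { replace (proj1_sig f x) with (proj1_sig f x / d * d) by (field; lra). nra. }
  destruct (approximation_exists (proj1_sig f) y (IZR z * d) ((IZR z + 1) * d)
      ((IZR z - 1) * d) ((IZR z + 2) * d) (proj2_sig f)) as [s [Hs [Ls HLs]]]; [nra | nra |].
  destruct (CX_code_defined f (s, (z, pred m))) as [Ls' HLs']; [exists Ls; exact HLs|].
  pose proof (CX_code_sound f _ _ HLs') as Hf. rewrite Hfg in HLs'.
  pose proof (CX_code_sound g _ _ HLs') as Hg.
  destruct (Hf y Hs) as [Hf1 _]. destruct (Hg y Hs) as [_ Hg2].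
  specialize (Hg2 (Hf1 Hfx)). simpl in Hg2. fold d in Hg2. apply Rabs_def1; nra.
Qed.

Lemma card_CX_le_c : card_le_c I -> countable J -> dense X D -> card_le_c (CX X).
Proof.
  intros HI HJ HD. apply (card_le_c_inj _ _ CX_code).
  - intros f g. apply CX_code_inj, HD.
  - apply card_le_c_fun.
    + apply countable_prod; [apply countable_list, HJ|].
      apply countable_prod; [apply countable_Z | apply countable_nat].
    + apply card_le_c_option, card_le_c_list, card_le_c_list, card_le_c_prod; exact HI.
Qed.

End CardinalityOfCX.

Lemma card_CX_of_dense_lindelof_sigma (X : Top) :
  tychonoff X -> nw_le_c X ->
  (exists D : X -> Prop, dense X D /\ lindelof_sigma (subspace X D)) -> card_le_c (CX X).
Proof.
  intros HX [I [N [HI HN]]] [D [HD [L [e [[[HL [_ [He _]]] _] [J [F [HJ [HF Hnag]]]]]]]]].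
  exact (card_CX_le_c X I N HX HN D L e J F HL He HF Hnag HI HJ HD).
Qed.

Theorem corollary2 (X : Top) :
  tychonoff X -> nw_le_c X ->
  (exists D : X -> Prop, dense X D /\ lindelof_sigma (subspace X D)) ->
  card_le_c (CX X) /\ w_le_c X /\
  (forall (K : Top) (e : X -> K), stone_cech X K e -> w_le_c K).
Proof.
  intros HX Hnw HD.
  pose proof (card_CX_of_dense_lindelof_sigma X HX Hnw HD) as HC.
  split; [exact HC | split].
  - exact (w_le_c_of_card_CX X (proj2 HX) HC).
  - intros K e [Hcomp _]. exact (w_le_c_of_compactification X K e Hcomp HC).
Qed.
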